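(* Let $\omega_1,\dots,\omega_n$ be non-zero real numbers, let $\tilde{\Delta} = \sum_{i=1}^n \omega_i \partial_{x_i}^2$, and let $k$ be a natural number. Let $q \in C^1(\mathbb{R}^n,\mathbb{R})$ be a scalar function such that there exists $m \le n$ with $q(\mathbf{x}) = f(x_m)\cdot \mathbf{x}_{i\neq m}^{\beta}$ for a multi-index $\beta \in \mathbb{N}_0^{n-1}$ and a function $f$ of the single variable $x_m$. Set $\lambda = \left\lceil \frac{|\beta|-1}{2}\right\rceil$ and $$W(\mathbf{x}) = \omega_m^{-\lambda-k}\, \mathcal{A}_{x_m}^{2\lambda+2k} q(\mathbf{x}) = \omega_m^{-\lambda-k}\, \mathbf{x}_{i\neq m}^{\beta}\, \mathcal{A}_{x_m}^{2\lambda+2k} f(x_m).$$ Then the function $$Q(\mathbf{x}) := \sum_{p=0}^{\lambda} (-1)^p \binom{k+p-1}{p} \omega_m^{\lambda-p}\, \partial_{x_m}^{2\lambda-2p}\, \tilde{\Delta}_{\setminus m}^{p} W(\mathbf{x}) = \sum_{p=0}^{\lambda} (-1)^p \binom{k+p-1}{p} \omega_m^{-p-k}\, \mathcal{A}_{x_m}^{2k+2p}\, \tilde{\Delta}_{\setminus m}^{p} q(\mathbf{x})$$ satisfies $\tilde{\Delta}^k Q = q$. In particular, for $k=1$, $$Q(\mathbf{x}) := \sum_{p=0}^{\lambda} (-1)^p \omega_m^{\lambda-p}\, \partial_{x_m}^{2\lambda-2p}\, \tilde{\Delta}_{\setminus m}^{p} W(\mathbf{x}) = \sum_{p=0}^{\lambda}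 (-1)^p \omega_m^{-p-1}\, \mathcal{A}_{x_m}^{2+2p}\, \tilde{\Delta}_{\setminus m}^{p} q(\mathbf{x})$$ satisfies $\tilde{\Delta} Q = q$.
   Context: $\mathbf{x}_{i\neq m}^{\beta}$ denotes the monomial $\prod_{i\neq m} x_i^{\beta_i}$ in the variables other than $x_m$, and $|\beta|$ is its total degree; $\lceil h\rceil$ is the least integer $\ge h$. The incomplete generalized Laplacian is $\tilde{\Delta}_{\setminus m} f := \sum_{i\neq m}\omega_i\partial_{x_i}^2 f$, with $\tilde{\Delta}_{\setminus m}^p$ its $p$-fold application. The antiderivative with respect to $x_j$ is $\mathcal{A}_{x_j} f(\mathbf{x}) := \int_{x_0}^{x_j} f(x_1,\dots,\xi_j,\dots,x_n)\, d\xi_j$ with a freely chosen lower limit $x_0$, and $\mathcal{A}_{x_j}^p := \mathcal{A}_{x_j}^{p-1}\mathcal{A}_{x_j}$, i.e. $\mathcal{A}_{x_j}^p f(\mathbf{x}) = \frac{1}{(p-1)!}\int_{x_0}^{x_j}(x_j-t_j)^{p-1} f(\dots,t_j,\dots)\,dt_j$. By convention all zeroth powers of these operators are the identity and $\partial_{x_j}^p\mathcal{A}_{x_j}^p f = f$. *)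

From Stdlib Require Import Reals ZArith.
From Coquelicot Require Import Coquelicot.
From mathcomp Require Import ssreflect ssrfun ssrbool eqtype ssrnat seq fintype bigop binomial.

Set Implicit Arguments.
Unset Strict Implicit.
Unset Printing Implicit Defensive.

Open Scope R_scope.

Definition pt (n : nat) := 'I_n -> R.

Definition upd (n : nat) (x : pt n) (i : 'I_n) (t : R) : pt n :=
  fun j => if j == i then t else x j.

Definition pd (n : nat) (i : 'I_n) (g : pt n -> R) : pt n -> R :=
  fun x => Derive (fun t => g (upd x i t)) (x i).

Definition pdn (n : nat) (i : 'I_n) (p : nat) (g : pt n -> R) : pt n -> R :=
  Nat.iter p (pd i) g.

Definition glap (n : nat) (w : 'I_n -> R) (g : pt n -> R) : pt n -> R :=
  fun x => \big[Rplus/0]_(i < n) (w i * pd i (pd i g) x).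

Definition glap_minus (n : nat) (w : 'I_n -> R) (m : 'I_n) (g : pt n -> R)
  : pt n -> R :=
  fun x => \big[Rplus/0]_(i < n | i != m) (w i * pd i (pd i g) x).

Definition glap_pow (n : nat) (w : 'I_n -> R) (p : nat) (g : pt n -> R) :=
  Nat.iter p (glap w) g.

Definition glap_minus_pow (n : nat) (w : 'I_n -> R) (m : 'I_n) (p : nat)
  (g : pt n -> R) := Nat.iter p (glap_minus w m) g.

Definition antid (n : nat) (x0 : R) (j : 'I_n) (g : pt n -> R) : pt n -> R :=
  fun x => RInt (fun xi => g (upd x j xi)) x0 (x j).

Definition antid_pow (n : nat) (x0 : R) (j : 'I_n) (p : nat) (g : pt n -> R) :=
  Nat.iter p (antid x0 j) g.

Definition antid1 (x0 : R) (f : R -> R) : R -> R := fun s => RInt f x0 s.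
Definition antid1_pow (x0 : R) (p : nat) (f : R -> R) := Nat.iter p (antid1 x0) f.

(* monomial x_{i<>m}^beta ; beta is indexed by 'I_n, entry beta m is unused *)
Definition mono_minus (n : nat) (m : 'I_n) (beta : 'I_n -> nat) (x : pt n) : R :=
  \big[Rmult/1]_(i < n | i != m) (x i ^ beta i).

Definition deg_minus (n : nat) (m : 'I_n) (beta : 'I_n -> nat) : nat :=
  \sum_(i < n | i != m) beta i.

(* ceil((b-1)/2) computed in Z: ceil(a/2) = - floor(-a/2) *)
Definition ceil_half_pred (b : nat) : nat :=
  Z.to_nat (- (Z.div (- (Z.of_nat b - 1)) 2))%Z.

Definition cont_at (n : nat) (g : pt n -> R) (x : pt n) : Prop :=
  forall eps : R, 0 < eps -> exists delta : R, 0 < delta /\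
    forall y : pt n, (forall i, Rabs (y i - x i) < delta) ->
      Rabs (g y - g x) < eps.

Definition C1_Rn (n : nat) (g : pt n -> R) : Prop :=
  forall (i : 'I_n) (x : pt n),
    ex_derive (fun t => g (upd x i t)) (x i) /\ cont_at (pd i g) x.

(* Write F_j for the j-th antiderivative of f, so that q = x^beta F_0(x_m).
   The operator Delta_{\m} acts only on factors independent of x_m, while
   d/dx_m and A_{x_m} act only on the factor F_j(x_m); hence both expressions
   for Q reduce to
     Q_k = sum_{p <= lam} a_{k,p} (Delta_{\m}^p x^beta) F_{2k+2p}(x_m),
     a_{k,p} = (-1)^p C(k+p-1, p) w_m^{-p-k}.
   Splitting Delta = w_m d^2/dx_m^2 + Delta_{\m}, the first part lowers the
   index of F and the second raises p; by Pascal's rule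
   w_m a_{k+1,p} + a_{k+1,p-1} = a_{k,p} the two sums recombine into Q_k, the
   boundary term vanishing because Delta_{\m}^{lam+1} x^beta = 0 by degree.
   So Delta Q_{k+1} = Q_k, and Delta^k Q_k = Q_0 = q. *)

From HB Require Import structures.
From Stdlib Require Import Reals ZArith Lia FunctionalExtensionality.
From Coquelicot Require Import Coquelicot.
From mathcomp Require Import ssreflect ssrfun ssrbool eqtype ssrnat seq fintype bigop binomial.
From mathcomp Require Import zify.

Set Implicit Arguments.
Unset Strict Implicit.
Unset Printing Implicit Defensive.

Open Scope R_scope.

HB.instance Definition _ := Monoid.isComLaw.Build R 0 Rplus
  (fun a b c => esym (Rplus_assoc a b c)) Rplus_comm Rplus_0_l.
HB.instance Definition _ := Monoid.isComLaw.Build R 1 Rmult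
  (fun a b c => esym (Rmult_assoc a b c)) Rmult_comm Rmult_1_l.
HB.instance Definition _ := Monoid.isMulLaw.Build R 0 Rmult Rmult_0_l Rmult_0_r.
HB.instance Definition _ := Monoid.isAddLaw.Build R Rmult Rplus
  Rmult_plus_distr_r Rmult_plus_distr_l.

Lemma is_derive_big (I : Type) (s : seq I) (P : pred I) (g : I -> R -> R) (dg : I -> R) t :
  (forall p, is_derive (g p) t (dg p)) ->
  is_derive (fun u => \big[Rplus/0]_(p <- s | P p) g p u) t (\big[Rplus/0]_(p <- s | P p) dg p).
Proof.
move=> hg; elim: s => [|a s IH].
  rewrite big_nil; apply: (is_derive_ext (fun=> 0)); last exact: is_derive_const.
  by move=> u; rewrite big_nil.
rewrite big_cons; case: ifP => Pa.
  apply: (is_derive_ext (fun u => g a u + \big[Rplus/0]_(p <- s | P p) g p u)).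
    by move=> u; rewrite big_cons Pa.
  exact: is_derive_plus.
by apply: (is_derive_ext _ _ _ _ _ IH) => u; rewrite big_cons Pa.
Qed.

Section Transverse.
Variables (n : nat) (m : 'I_n).

Lemma upd_same (x : pt n) i t : upd x i t i = t.
Proof. by rewrite /upd eqxx. Qed.

Lemma upd_other (x : pt n) i t j : j != i -> upd x i t j = x j.
Proof. by rewrite /upd => /negbTE ->. Qed.

Lemma upd_upd (x : pt n) i s t : upd (upd x i s) i t = upd x i t.
Proof. by apply: functional_extensionality => j; rewrite /upd; case: (j == i). Qed.

Lemma pd_big (I : Type) (s : seq I) (P : pred I) i (h : I -> pt n -> R) :
  (forall p y, ex_derive (fun t => h p (upd y i t)) (y i)) ->
  pd i (fun x => \big[Rplus/0]_(p <- s | P p) h p x)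
  = fun x => \big[Rplus/0]_(p <- s | P p) pd i (h p) x.
Proof.
move=> hh; apply: functional_extensionality => x; apply: is_derive_unique.
by apply: is_derive_big => p; apply: Derive_correct.
Qed.

Definition indep (g : pt n -> R) := forall x t, g (upd x m t) = g x.

(* [deg_lt d g]: [g] does not depend on [x_m] and every [d]-fold derivative
   of [g] in the other directions exists and vanishes, i.e. [g] is a polynomial
   of degree [< d] in the variables [x_i], [i <> m]. *)
Fixpoint deg_lt (d : nat) (g : pt n -> R) : Prop :=
  match d with
  | 0 => forall x, g x = 0
  | d.+1 => [/\ indep g,
             forall i x, i != m -> ex_derive (fun t => g (upd x i t)) (x i)
           & forall i, i != m -> deg_lt d (pd i g)]
  end.

Lemma deg_lt0 d : deg_lt d (fun=> 0).
Proof.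
elim: d => [|d IH] //=; split => // [i x _ | i _]; first exact: ex_derive_const.
suff -> : pd i (fun=> 0) = fun=> 0 by [].
by apply: functional_extensionality => x; rewrite /pd Derive_const.
Qed.

Lemma eq_deg_lt d g h : deg_lt d g -> (forall x, g x = h x) -> deg_lt d h.
Proof. by move=> + /functional_extensionality <-. Qed.

Lemma deg_lt_indep d g : deg_lt d g -> indep g.
Proof. by case: d => [|d] /= h; [move=> x t; rewrite !h | case: h]. Qed.

Lemma deg_lt_ex_derive d g i y : i != m -> deg_lt d.+1 g ->
  ex_derive (fun t => g (upd y i t)) (y i).
Proof. by move=> hi [_ h _]; apply: h. Qed.

Lemma deg_lt_pd d g i : i != m -> deg_lt d.+1 g -> deg_lt d (pd i g).
Proof. by move=> hi [_ _ h]; apply: h. Qed.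

Lemma deg_lt_add d g h : deg_lt d g -> deg_lt d h -> deg_lt d (fun x => g x + h x).
Proof.
elim: d g h => [|d IH] g h /=; first by move=> hg hh x; rewrite hg hh Rplus_0_l.
case=> g1 g2 g3 [h1 h2 h3]; split.
- by move=> x t; rewrite g1 h1.
- by move=> i x hi; apply: ex_derive_plus; auto.
- move=> i hi; suff -> : pd i (fun x => g x + h x) = fun x => pd i g x + pd i h x by auto.
  apply: functional_extensionality => x; rewrite /pd Derive_plus //; auto.
Qed.

Lemma deg_lt_scale d c g : deg_lt d g -> deg_lt d (fun x => c * g x).
Proof.
elim: d g => [|d IH] g /=; first by move=> hg x; rewrite hg Rmult_0_r.
case=> g1 g2 g3; split.
- by move=> x t; rewrite g1.
- by move=> i x hi; apply: ex_derive_scal; auto.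
- move=> i hi; suff -> : pd i (fun x => c * g x) = fun x => c * pd i g x by auto.
  by apply: functional_extensionality => x; rewrite /pd Derive_scal.
Qed.

Lemma deg_lt_big d (I : Type) (s : seq I) (P : pred I) (g : I -> pt n -> R) :
  (forall p, P p -> deg_lt d (g p)) ->
  deg_lt d (fun x => \big[Rplus/0]_(p <- s | P p) g p x).
Proof.
move=> hg; elim: s => [|a s IH].
  by apply: (eq_deg_lt (deg_lt0 d)) => x; rewrite big_nil.
case: (boolP (P a)) => Pa.
  apply: (eq_deg_lt (deg_lt_add (hg a Pa) IH)) => x.
  by rewrite big_cons Pa.
by apply: (eq_deg_lt IH) => x; rewrite big_cons (negbTE Pa).
Qed.

Lemma mono_minus_bigD1 e i x : i != m ->
  mono_minus m e x = x i ^ e i * \big[Rmult/1]_(j < n | (j != m) && (j != i)) x j ^ e j.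
Proof. by move=> hi; rewrite /mono_minus (bigD1 i). Qed.

Lemma deg_minus_bigD1 e i : i != m ->
  deg_minus m e = (e i + \sum_(j < n | (j != m) && (j != i)) e j)%nat.
Proof. by move=> hi; rewrite /deg_minus (bigD1 i). Qed.

Lemma indep_mono_minus e : indep (mono_minus m e).
Proof. by move=> x t; apply: eq_bigr => j hj; rewrite upd_other. Qed.

Lemma is_derive_mono_minus e i x : i != m ->
  is_derive (fun t => mono_minus m e (upd x i t)) (x i)
    (INR (e i) * mono_minus m (fun j => if j == i then (e i).-1 else e j) x).
Proof.
move=> hi; set r := \big[Rmult/1]_(j < n | (j != m) && (j != i)) x j ^ e j.
apply: (is_derive_ext (fun t => t ^ e i * r)).
  move=> t; rewrite (mono_minus_bigD1 _ _ hi) upd_same; congr (_ * _).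
  by apply: eq_bigr => j /andP [_ hj]; rewrite upd_other.
rewrite (mono_minus_bigD1 _ _ hi) eqxx.
have -> : \big[Rmult/1]_(j < n | (j != m) && (j != i))
            x j ^ (if j == i then (e i).-1 else e j) = r.
  by apply: eq_bigr => j /andP [_ /negbTE ->].
by auto_derive; first done; ring.
Qed.

Lemma deg_lt_mono_minus d e : (deg_minus m e < d)%nat -> deg_lt d (mono_minus m e).
Proof.
elim: d e => [|d IH] e //= hd; split => [|i x hi|i hi].
- exact: indep_mono_minus.
- by eexists; apply: is_derive_mono_minus.
set e' := fun j => if j == i then (e i).-1 else e j.
have pd_mono : forall x, INR (e i) * mono_minus m e' x = pd i (mono_minus m e) x.
  by move=> x; rewrite /pd (is_derive_unique _ _ _ (is_derive_mono_minus e x hi)).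
apply: (eq_deg_lt _ pd_mono).
case hei: (e i) => [|k].
  by apply: (eq_deg_lt (deg_lt0 d)) => x; rewrite Rmult_0_l.
apply: deg_lt_scale; apply: IH.
move: hd; rewrite !(deg_minus_bigD1 _ hi) {1}/e' eqxx.
suff -> : \sum_(j < n | (j != m) && (j != i)) e' j = \sum_(j < n | (j != m) && (j != i)) e j
  by rewrite /= hei; lia.
by apply: eq_bigr => j /andP [_ /negbTE hj]; rewrite /e' hj.
Qed.

Variable w : 'I_n -> R.

Lemma glap_split g x : glap w g x = w m * pdn m 2 g x + glap_minus w m g x.
Proof. by rewrite /glap (bigD1 m). Qed.

Lemma deg_lt_glap_minus d g : deg_lt d.+2 g -> deg_lt d (glap_minus w m g).
Proof.
move=> hg; apply: deg_lt_big => i hi; apply: deg_lt_scale.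
by apply: (deg_lt_pd hi); apply: (deg_lt_pd hi).
Qed.

Lemma deg_lt_glap_minus_pow d r g : deg_lt (d + 2 * r) g -> deg_lt d (glap_minus_pow w m r g).
Proof.
elim: r d => [|r IH] d; first by rewrite addn0.
move=> hg; apply: deg_lt_glap_minus; apply: IH.
by have -> : (d.+2 + 2 * r = d + 2 * r.+1)%nat by lia.
Qed.

Definition sep (a : R) (c : pt n -> R) (G : R -> R) : pt n -> R :=
  fun x => a * c x * G (x m).

Lemma pd_sep_other i a c G : i != m -> pd i (sep a c G) = sep a (pd i c) G.
Proof.
move=> hi; have hmi : m != i by rewrite eq_sym.
apply: functional_extensionality => x; rewrite /pd /sep.
rewrite (Derive_ext _ (fun t => a * G (x m) * c (upd x i t))); last first.
  by move=> t; rewrite (upd_other _ _ hmi); ring.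
by rewrite Derive_scal; ring.
Qed.

Lemma ex_derive_sep_other i a (c : pt n -> R) (G : R -> R) y : i != m ->
  ex_derive (fun t => c (upd y i t)) (y i) ->
  ex_derive (fun t => sep a c G (upd y i t)) (y i).
Proof.
move=> hi hc; have hmi : m != i by rewrite eq_sym.
apply: (ex_derive_ext (fun t => a * G (y m) * c (upd y i t))).
  by move=> t; rewrite /sep (upd_other _ _ hmi) Rmult_assoc (Rmult_comm (G _)) -Rmult_assoc.
exact: ex_derive_scal.
Qed.

Lemma glap_minus_sep a c G : glap_minus w m (sep a c G) = sep a (glap_minus w m c) G.
Proof.
apply: functional_extensionality => x; rewrite /glap_minus /sep big_distrr big_distrl /=.
by apply: eq_bigr => i hi; rewrite !pd_sep_other // /sep; ring.
Qed.

Lemma glap_minus_pow_sep r a c G :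
  glap_minus_pow w m r (sep a c G) = sep a (glap_minus_pow w m r c) G.
Proof.
elim: r => [|r IH] //.
by rewrite /glap_minus_pow !Nat.iter_succ -/(glap_minus_pow w m r _) IH glap_minus_sep.
Qed.

Lemma glap_minus_big_sep d N (a : 'I_N -> R) (c : 'I_N -> pt n -> R) (G : 'I_N -> R -> R) :
  (forall p, deg_lt d.+2 (c p)) ->
  glap_minus w m (fun x => \big[Rplus/0]_(p < N) sep (a p) (c p) (G p) x)
  = fun x => \big[Rplus/0]_(p < N) sep (a p) (glap_minus w m (c p)) (G p) x.
Proof.
move=> hc.
have pd_sum i (e : 'I_N -> pt n -> R) : i != m ->
    (forall p y, ex_derive (fun t => e p (upd y i t)) (y i)) ->
    pd i (fun x => \big[Rplus/0]_(p < N) sep (a p) (e p) (G p) x)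
    = fun x => \big[Rplus/0]_(p < N) sep (a p) (pd i (e p)) (G p) x.
  move=> hi he; rewrite pd_big; last by move=> p y; apply: ex_derive_sep_other.
  by apply: functional_extensionality => x; apply: eq_bigr => p _; rewrite pd_sep_other.
apply: functional_extensionality => x; rewrite /glap_minus.
rewrite (eq_bigr (fun i => \big[Rplus/0]_(p < N) (w i * sep (a p) (pd i (pd i (c p))) (G p) x))).
  rewrite exchange_big; apply: eq_bigr => p _; rewrite /sep big_distrr big_distrl /=.
  by apply: eq_bigr => i _; ring.
move=> i hi; rewrite !pd_sum ?big_distrr // => p y.
  exact: (deg_lt_ex_derive y hi (deg_lt_pd hi (hc p))).
exact: (deg_lt_ex_derive y hi (hc p)).
Qed.

Variable x0 : R.

Lemma is_derive_antid1 g s : (forall t, continuous g t) -> is_derive (antid1 x0 g) s (g s).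
Proof.
move=> hg; apply: (is_derive_RInt _ _ x0) => //.
by apply: filter_forall => b; apply: RInt_correct; apply: ex_RInt_continuous => z _.
Qed.

Variable f : R -> R.
Hypothesis f_cont : forall s, continuous f s.

Local Notation F j := (antid1_pow x0 j f).

Lemma continuous_antid1_pow j s : continuous (F j) s.
Proof.
elim: j s => [|j IH] s //; apply: ex_derive_continuous.
by eexists; apply: is_derive_antid1.
Qed.

Lemma is_derive_antid1_pow j s : is_derive (F j.+1) s (F j s).
Proof. by apply: is_derive_antid1 => t; apply: continuous_antid1_pow. Qed.

Lemma pd_sep_m a c j : indep c -> pd m (sep a c (F j.+1)) = sep a c (F j).
Proof.
move=> hc; apply: functional_extensionality => x; rewrite /pd /sep.
rewrite (Derive_ext _ (fun t => a * c x * F j.+1 t)); last by move=> t; rewrite upd_same hc.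
by rewrite Derive_scal (is_derive_unique _ _ _ (is_derive_antid1_pow j (x m))).
Qed.

Lemma ex_derive_sep_m a (c : pt n -> R) j y : indep c ->
  ex_derive (fun t => sep a c (F j.+1) (upd y m t)) (y m).
Proof.
move=> hc; apply: (ex_derive_ext (fun t => a * c y * F j.+1 t)).
  by move=> t; rewrite /sep upd_same hc.
by apply: ex_derive_scal; eexists; apply: is_derive_antid1_pow.
Qed.

Lemma pdn_sep_m s a c j : indep c -> pdn m s (sep a c (F (s + j))) = sep a c (F j).
Proof.
move=> hc; elim: s => [|s IH] //.
by rewrite /pdn Nat.iter_succ_r -/(pdn m s _) -IH pd_sep_m.
Qed.

Lemma pdn_big_sep_m s N (a : 'I_N -> R) (c : 'I_N -> pt n -> R) j :
  (forall p, indep (c p)) ->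
  pdn m s (fun x => \big[Rplus/0]_(p < N) sep (a p) (c p) (F (s + j p)) x)
  = fun x => \big[Rplus/0]_(p < N) sep (a p) (c p) (F (j p)) x.
Proof.
move=> hc; elim: s => [|s IH] //; rewrite /pdn Nat.iter_succ_r -/(pdn m s _) -IH.
congr (pdn m s); rewrite pd_big; last by move=> p y; apply: ex_derive_sep_m.
by apply: functional_extensionality => x; apply: eq_bigr => p _; rewrite pd_sep_m.
Qed.

Lemma antid_sep a c j : indep c -> antid x0 m (sep a c (F j)) = sep a c (F j.+1).
Proof.
move=> hc; apply: functional_extensionality => x; rewrite /antid /sep.
rewrite (RInt_ext _ (fun t => scal (a * c x) (F j t))); last by move=> t _; rewrite upd_same hc.
rewrite RInt_scal //; apply: ex_RInt_continuous => z _; exact: continuous_antid1_pow.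
Qed.

Lemma antid_pow_sep J a c j : indep c ->
  antid_pow x0 m J (sep a c (F j)) = sep a c (F (J + j)).
Proof.
move=> hc; elim: J => [|J IH] //.
by rewrite /antid_pow /= in IH *; rewrite IH antid_sep.
Qed.

Definition coef (wm : R) (k p : nat) : R :=
  (-1) ^ p * INR 'C(k + p - 1, p) * / wm ^ (p + k).

Lemma coef_rec wm k p : wm <> 0 ->
  wm * coef wm k.+1 p + (if p is p'.+1 then coef wm k.+1 p' else 0) = coef wm k p.
Proof.
move=> wm0; rewrite /coef; case: p => [|p].
  by rewrite !addn0 !bin0 /= add0n; field; split => //; apply: pow_nonzero.
have -> : (k.+1 + p.+1 - 1 = (k + p).+1)%nat by lia.
have -> : (k.+1 + p - 1 = k + p)%nat by lia.
have -> : (k + p.+1 - 1 = k + p)%nat by lia.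
have -> : (p.+1 + k.+1 = (p + k).+2)%nat by lia.
have -> : (p + k.+1 = (p + k).+1)%nat by lia.
by rewrite binS plus_INR addSn /=; field; split => //; apply: pow_nonzero.
Qed.

Lemma coef_pow_split wm k p lam : wm <> 0 -> (p <= lam)%nat ->
  (-1) ^ p * INR 'C(k + p - 1, p) * wm ^ (lam - p) * / wm ^ (lam + k) = coef wm k p.
Proof.
move=> wm0 hp; rewrite /coef (_ : (lam + k = (lam - p) + (p + k))%nat); last by lia.
rewrite pow_add; field; split; exact: pow_nonzero.
Qed.

Lemma sum_shift_rec L (a b u : nat -> R) c : u L = 0 ->
  (forall p, c * a p + (if p is p'.+1 then a p' else 0) = b p) ->
  c * \big[Rplus/0]_(p < L) (a p * u p) + \big[Rplus/0]_(p < L) (a p * u p.+1)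
  = \big[Rplus/0]_(p < L) (b p * u p).
Proof.
move=> uL hab.
have shift : \big[Rplus/0]_(p < L) (a p * u p.+1)
             = \big[Rplus/0]_(p < L) ((if (p : nat) is p'.+1 then a p' else 0) * u p).
  move: uL; case: L => [|L] uL; first by rewrite !big_ord0.
  by rewrite big_ord_recr big_ord_recl /= uL Rmult_0_r Rmult_0_l Rplus_0_r Rplus_0_l.
rewrite shift big_distrr -big_split; apply: eq_bigr => p _ /=.
by rewrite -hab; ring.
Qed.

Variable beta : 'I_n -> nat.

Definition glap_minus_mono p := glap_minus_pow w m p (mono_minus m beta).

Lemma deg_lt_glap_minus_mono p : deg_lt (deg_minus m beta).+3 (glap_minus_mono p).
Proof. by apply: deg_lt_glap_minus_pow; apply: deg_lt_mono_minus; lia. Qed.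

Lemma indep_glap_minus_mono p : indep (glap_minus_mono p).
Proof. exact: deg_lt_indep (deg_lt_glap_minus_mono p). Qed.

Lemma Qsum_term_antid k p x :
  (-1) ^ p * INR 'C(k + p - 1, p) * / w m ^ (p + k)
  * antid_pow x0 m (2 * k + 2 * p) (glap_minus_pow w m p (sep 1 (mono_minus m beta) f)) x
  = sep (coef (w m) k p) (glap_minus_mono p) (F (2 * (k + p))) x.
Proof.
rewrite glap_minus_pow_sep -/(glap_minus_mono p).
rewrite (antid_pow_sep _ _ 0 (indep_glap_minus_mono p)).
by rewrite /sep /coef addn0 mulnDr; ring.
Qed.

Variable lam : nat.

Definition Qsum k : pt n -> R := fun x =>
  \big[Rplus/0]_(p < lam.+1) sep (coef (w m) k p) (glap_minus_mono p) (F (2 * (k + p))) x.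

Lemma Qsum0 x : Qsum 0 x = mono_minus m beta x * f (x m).
Proof.
rewrite /Qsum big_ord_recl big1 => [|p _]; last first.
  by rewrite /sep /coef lift0 bin_small /=; [ring | lia].
by rewrite /sep /coef /=; field.
Qed.

Hypothesis wm_neq0 : w m <> 0.

Lemma Qsum_term_pdn k p x : (p <= lam)%nat ->
  (-1) ^ p * INR 'C(k + p - 1, p) * w m ^ (lam - p)
  * pdn m (2 * lam - 2 * p)
      (glap_minus_pow w m p (sep (/ w m ^ (lam + k)) (mono_minus m beta) (F (2 * lam + 2 * k)))) x
  = sep (coef (w m) k p) (glap_minus_mono p) (F (2 * (k + p))) x.
Proof.
move=> hp; rewrite glap_minus_pow_sep -/(glap_minus_mono p).
have -> : (2 * lam + 2 * k = (2 * lam - 2 * p) + 2 * (k + p))%nat by lia.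
rewrite pdn_sep_m; last exact: indep_glap_minus_mono.
by rewrite /sep -(coef_pow_split k wm_neq0 hp); ring.
Qed.

Hypothesis lam_bound : (deg_minus m beta < 2 * lam.+1)%nat.

Lemma glap_minus_mono_vanish x : glap_minus_mono lam.+1 x = 0.
Proof.
have vanish : deg_lt 0 (glap_minus_mono lam.+1).
  by apply: deg_lt_glap_minus_pow; apply: deg_lt_mono_minus.
exact: vanish.
Qed.

Lemma glap_Qsum k : glap w (Qsum k.+1) = Qsum k.
Proof.
have Qsum_succ : Qsum k.+1 = fun x => \big[Rplus/0]_(p < lam.+1)
    sep (coef (w m) k.+1 p) (glap_minus_mono p) (F (2 + 2 * (k + p))) x.
  by apply: functional_extensionality => x; apply: eq_bigr => p _; rewrite addSn mulnS.
apply: functional_extensionality => x.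
rewrite glap_split Qsum_succ pdn_big_sep_m; last exact: indep_glap_minus_mono.
rewrite (glap_minus_big_sep _ _ deg_lt_glap_minus_mono).
pose u p := glap_minus_mono p x * F (2 * (k + p)) (x m).
have uL : u lam.+1 = 0 by rewrite /u glap_minus_mono_vanish Rmult_0_l.
rewrite /Qsum [RHS](eq_bigr (fun p : 'I_lam.+1 => coef (w m) k p * u p)); last first.
  by move=> p _; rewrite /sep /u; ring.
rewrite -(sum_shift_rec uL (fun p => coef_rec k p wm_neq0)).
have monoS p : glap_minus_mono p.+1 = glap_minus w m (glap_minus_mono p) by [].
by congr (_ * _ + _); apply: eq_bigr => p _; rewrite /sep /u ?monoS ?addnS ?mulnS; ring.
Qed.

Lemma glap_pow_Qsum k : glap_pow w k (Qsum k) = Qsum 0.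
Proof. by elim: k => [|k IH] //; rewrite /glap_pow Nat.iter_succ_r glap_Qsum. Qed.

End Transverse.

Lemma ceil_half_pred_bound b : (b < 2 * (ceil_half_pred b).+1)%nat.
Proof.
rewrite /ceil_half_pred.
have := Z.div_mod (- (Z.of_nat b - 1)) 2; have := Z.mod_pos_bound (- (Z.of_nat b - 1)) 2.
lia.
Qed.

Lemma continuous_of_C1_sep n (m : 'I_n) beta f q : C1_Rn q ->
  (forall x, q x = f (x m) * mono_minus m beta x) -> forall s, continuous f s.
Proof.
move=> hq1 hq s; pose one : pt n := fun=> 1.
have mono_one : mono_minus m beta one = 1 by rewrite /mono_minus big1 // => i _; rewrite pow1.
have := (hq1 m (upd one m s)).1; rewrite upd_same => /ex_derive_continuous.
apply: continuous_ext => t.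
by rewrite upd_upd hq upd_same indep_mono_minus mono_one Rmult_1_r.
Qed.

Theorem corollary5p1
  (n : nat) (w : 'I_n -> R) (hw : forall i, w i <> 0)
  (k : nat) (hk : (1 <= k)%nat)
  (m : 'I_n) (beta : 'I_n -> nat) (f : R -> R) (q : pt n -> R)
  (hq1 : C1_Rn q)
  (hq : forall x, q x = f (x m) * mono_minus m beta x)
  (x0 : R) :
  let lam := ceil_half_pred (deg_minus m beta) in
  let W := fun x => / (w m ^ (lam + k)) * antid_pow x0 m (2 * lam + 2 * k) q x in
  let Q := fun x =>
    \big[Rplus/0]_(p < lam.+1)
      ((-1) ^ p * INR 'C(k + p - 1, p) * w m ^ (lam - p)
         * pdn m (2 * lam - 2 * p) (glap_minus_pow w m p W) x) in
  (forall x, W x = / (w m ^ (lam + k)) * mono_minus m beta x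
                     * antid1_pow x0 (2 * lam + 2 * k) f (x m)) /\
  (forall x, Q x =
    \big[Rplus/0]_(p < lam.+1)
      ((-1) ^ p * INR 'C(k + p - 1, p) * / (w m ^ (p + k))
         * antid_pow x0 m (2 * k + 2 * p) (glap_minus_pow w m p q) x)) /\
  (forall x, glap_pow w k Q x = q x).
Proof.
move=> lam W Q.
have f_cont := continuous_of_C1_sep hq1 hq.
have lam_bound := ceil_half_pred_bound (deg_minus m beta).
have hqs : q = sep m 1 (mono_minus m beta) f.
  by apply: functional_extensionality => x; rewrite hq /sep Rmult_1_l Rmult_comm.
have hW : W = sep m (/ w m ^ (lam + k)) (mono_minus m beta) (antid1_pow x0 (2 * lam + 2 * k) f).
  apply: functional_extensionality => x.
  rewrite /W hqs (antid_pow_sep x0 f_cont _ _ 0 (indep_mono_minus m beta)).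
  by rewrite [(_ + 0)%nat]addn0 /sep; ring.
have hQ : Q = Qsum m w x0 f beta lam k.
  apply: functional_extensionality => x; apply: eq_bigr => p _.
  by rewrite hW (Qsum_term_pdn _ f_cont _ (hw m)) // -ltnS.
split; [by move=> x; rewrite hW | split => x].
- by rewrite hQ; apply: eq_bigr => p _; rewrite hqs (Qsum_term_antid _ _ _ f_cont).
- by rewrite hQ (glap_pow_Qsum _ f_cont (hw m) lam_bound) Qsum0 hq Rmult_comm.
Qed.
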